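(* Let $b\ge3$, $D\subset\{0,\dots,b-1\}$ with $0\in D$ and $2\le|D|<b$, and list $\mathcal C=\mathcal C_{b,D}$ increasingly as $k_1<k_2<\cdots$. Then for every $q\in\mathbb N$, $$\lim_{N\to\infty}\frac1N\#\{n\le N: k_n\equiv 0\pmod q\}$$ exists and is strictly positive.
   Context: $\mathcal C_{b,D}=\{\sum_{j=0}^{k} d_j b^j : k\in\mathbb N_0,\ d_j\in D\}$. *)

From Stdlib Require Import Reals.
From mathcomp Require Import all_boot.

Set Implicit Arguments.
Unset Strict Implicit.
Unset Printing Implicit Defensive.

Definition inC (b : nat) (D : {set 'I_b}) (x : nat) : Prop :=
  exists (k : nat) (d : nat -> 'I_b),
    (forall j, j <= k -> d j \in D) /\
    x = \sum_(j < k.+1) (nat_of_ord (d j)) * b ^ j.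

(* number of n in {0,..,N-1} with q | k n  (0-indexed enumeration) *)
Definition count_div (k : nat -> nat) (q N : nat) : nat :=
  count (fun n => q %| k n) (iota 0 N).

Definition density_seq (k : nat -> nat) (q : nat) : nat -> R :=
  fun N => Rdiv (INR (count_div k q N)) (INR N).

From mathcomp Require Import all_boot zify.
From Stdlib Require Import Reals Lra Classical.
(* [Reals] rebinds [_ ^ _] on [nat] to [Nat.pow]; restore [expn]. *)
From mathcomp Require Import ssrnat.

Set Implicit Arguments.
Unset Strict Implicit.
Unset Printing Implicit Defensive.

(* Let 0 = d_0 < ... < d_(m-1) list D (m = #|D|).  The n-th element of C
   (counting from 0) is obtained by writing n in base m and replacing each
   digit s by d_s, read in base b; hence k (a * m^L + r) = k a * b^L + k r for
   r < m^L.  Pick P > 0 with E = b^P idempotent modulo q and put M = m^P; then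
   E * k (a * M^t + r) = E * k a + E * k r (mod q), so the residues of the
   E * k r form a subgroup H of Z/q.  Counting, for each residue c, the r < M^j
   with c + E * k r = 0 (mod q) is a random walk on H that, once K is large
   enough for M^K steps to reach all of H, equidistributes geometrically fast
   (Doeblin's argument).  Splitting n = (a * M^(jK) + y) * M + s shows that
   each block of length M^(jK+1) contains about G * M^(jK) / |H| multiples of
   q, where G > 0 counts the s < M with k s in H; the density is G / (|H| M). *)

Section Enumeration.
Variables (b : nat) (D : {set 'I_b}).
Hypothesis D0 : exists2 d : 'I_b, d \in D & nat_of_ord d = 0.
Hypothesis D_gt1 : 1 < #|D|.

Local Notation m := #|D|.

Definition digits := [seq x <- iota 0 b | x \in [seq val d | d <- enum D]].

Definition digit i := nth 0 digits i.

Lemma mem_digits x : (x \in digits) = (x \in [seq val d | d <- enum D]).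
Proof.
rewrite mem_filter mem_iota add0n /=.
by case E: (x \in _) => //=; move/mapP: E => [d _ ->]; rewrite ltn_ord.
Qed.

Lemma size_digits : size digits = m.
Proof.
rewrite cardE -(size_map val); apply: perm_size; apply: uniq_perm.
- by rewrite filter_uniq // iota_uniq.
- by rewrite map_inj_uniq ?enum_uniq //; apply: val_inj.
- by move=> x; rewrite mem_digits.
Qed.

Lemma digit_mono i j : i < j -> j < m -> digit i < digit j.
Proof.
move=> ij jm; have sorted_digits : sorted ltn digits.
  by apply: sorted_filter; [exact: ltn_trans | exact: iota_ltn_sorted].
apply: (sorted_ltn_nth ltn_trans 0 sorted_digits); rewrite ?inE ?size_digits //.
exact: ltn_trans ij jm.
Qed.

Lemma digit_inD i : i < m -> exists2 d : 'I_b, d \in D & val d = digit i.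
Proof.
move=> im; have : digit i \in digits by rewrite /digit mem_nth // size_digits.
by rewrite mem_digits => /mapP [d]; rewrite mem_enum => dD ->; exists d.
Qed.

Lemma digit_ltb i : i < m -> digit i < b.
Proof. by move=> /digit_inD [d _ <-]; apply: ltn_ord. Qed.

Lemma digit_onto (d : 'I_b) : d \in D -> exists2 i, i < m & digit i = val d.
Proof.
move=> dD; have dD' : val d \in digits.
  by rewrite mem_digits; apply: map_f; rewrite mem_enum.
exists (index (val d) digits); first by rewrite -size_digits index_mem.
by rewrite /digit nth_index.
Qed.

Lemma digit0 : digit 0 = 0.
Proof.
case: D0 => d dD d0; case: (digit_onto dD) => [[|i] im di]; first by rewrite di.
by have := digit_mono (ltn0Sn i) im; rewrite di /= d0.
Qed.

(* The fuel [n] suffices for [enumC n] since [n %/ m < n] for [n > 0]. *)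
Fixpoint enumC_fuel (f n : nat) : nat :=
  if f is f'.+1 then digit (n %% m) + b * enumC_fuel f' (n %/ m) else 0.

Definition enumC n := enumC_fuel n n.

Lemma enumC_fuel0 f : enumC_fuel f 0 = 0.
Proof. by elim: f => //= f IH; rewrite mod0n div0n IH digit0 muln0. Qed.

Lemma enumC_fuel_eq f f' n : n <= f -> n <= f' -> enumC_fuel f n = enumC_fuel f' n.
Proof.
elim: f f' n => [|f IH] [|f'] n //.
- by rewrite leqn0 => /eqP -> _; rewrite !enumC_fuel0.
- by rewrite leqn0 => _ /eqP ->; rewrite !enumC_fuel0.
move=> nf nf' /=; congr (_ + b * _).
case: n nf nf' => [|n] nf nf'; first by rewrite div0n !enumC_fuel0.
by apply: IH; rewrite -ltnS; apply: leq_trans (ltn_Pdiv D_gt1 (ltn0Sn n)) _.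
Qed.

Lemma enumCE n : enumC n = digit (n %% m) + b * enumC (n %/ m).
Proof.
case: n => [|n]; first by rewrite /= mod0n div0n digit0 muln0.
rewrite /enumC /=; congr (_ + b * _); apply: enumC_fuel_eq => //.
by rewrite -ltnS ltn_Pdiv.
Qed.

Lemma enumC_digit a s : s < m -> enumC (a * m + s) = digit s + b * enumC a.
Proof.
move=> sm; rewrite enumCE modnMDl divnMDl ?(ltnW D_gt1) //.
by rewrite modn_small // divn_small // addn0.
Qed.

Lemma enumC_block L a r : r < m ^ L -> enumC (a * m ^ L + r) = enumC a * b ^ L + enumC r.
Proof.
elim: L a r => [|L IH] a r.
  by rewrite !expn0 ltnS leqn0 => /eqP ->; rewrite !muln1 addn0 addn0.
move=> rL; have m_gt0 : 0 < m by apply: ltnW.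
have -> : a * m ^ L.+1 + r = (a * m ^ L + r %/ m) * m + r %% m.
  by rewrite mulnDl -mulnA -expnSr -addnA -divn_eq.
rewrite enumC_digit ?ltn_mod // IH; last by rewrite ltn_divLR // -expnSr.
by rewrite (enumCE r) expnS; nia.
Qed.

Lemma enumC_ltS n : enumC n < enumC n.+1.
Proof.
have m_gt0 : 0 < m by apply: ltnW.
elim/ltn_ind: n => n IH.
rewrite {1 2}(divn_eq n m) enumC_digit ?ltn_mod //.
set a := n %/ m; set s := n %% m.
have sm : s < m by rewrite ltn_mod.
case: (ltnP s.+1 m) => [s1m|ms1].
  by rewrite -[(a * m + s).+1]addnS enumC_digit // ltn_add2r digit_mono.
(* a carry: the last digit wraps around to [digit 0 = 0] *)
have es : s.+1 = m by apply/eqP; rewrite eqn_leq ms1 sm.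
rewrite -[(a * m + s).+1]addnS es -mulSnr -[_ * m]addn0 enumC_digit // digit0 add0n.
have alt : a < n.
  have s1 : 1 <= s by rewrite -ltnS es.
  by rewrite /a ltn_Pdiv //; apply: leq_trans s1 _; rewrite /s leq_mod.
have := digit_ltb sm.
have : b * (enumC a).+1 <= b * enumC a.+1 by rewrite leq_mul2l (IH a alt) orbT.
rewrite mulnS; lia.
Qed.

Lemma inC_digit_step x s : inC D x -> s < m -> inC D (digit s + b * x).
Proof.
move=> [k [d [dD ->]]] /digit_inD [ds dsD dsE].
exists k.+1, (fun j => if j is j'.+1 then d j' else ds); split.
  by case=> [|j] //= jk; apply: dD.
rewrite [RHS]big_ord_recl /= expn0 muln1 -dsE big_distrr; congr (_ + _).
by apply: eq_bigr => i _; rewrite /bump /= add1n expnS mulnCA.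
Qed.

Lemma inC_enumC n : inC D (enumC n).
Proof.
elim/ltn_ind: n => -[|n] IH.
  by case: D0 => d dD d0; exists 0, (fun _ => d); rewrite big_ord1 d0.
rewrite enumCE; apply: inC_digit_step; last by rewrite ltn_mod ltnW.
by apply: IH; rewrite ltn_Pdiv.
Qed.

Lemma enumC_onto x : inC D x -> exists n, enumC n = x.
Proof.
move=> [k [d [dD ->]]]; elim: k d dD => [|k IH] d dD.
  have [i im iE] := digit_onto (dD 0 (leqnn 0)).
  exists i; rewrite big_ord1 expn0 muln1 -iE.
  by have := enumC_digit 0 im; rewrite mul0n add0n muln0 addn0.
have [n' En'] := IH (fun j => d j.+1) (fun j jk => dD j.+1 jk).
have [i im iE] := digit_onto (dD 0 (leq0n _)).
exists (n' * m + i); rewrite enumC_digit // En' [RHS]big_ord_recl /= expn0 muln1 iE.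
congr (_ + _); rewrite big_distrr /=; apply: eq_bigr => j _.
by rewrite /bump /= add1n expnS mulnCA.
Qed.

End Enumeration.

Lemma increasing_enum_unique (f g : nat -> nat) :
  (forall n, f n < f n.+1) -> (forall n, g n < g n.+1) ->
  (forall x, (exists n, f n = x) <-> (exists n, g n = x)) -> f =1 g.
Proof.
move=> f_incr g_incr fg.
have f_lt := homo_ltn ltn_trans f_incr; have g_lt := homo_ltn ltn_trans g_incr.
have f_le := homo_leq leqnn leq_trans (fun n => ltnW (f_incr n)).
have g_le := homo_leq leqnn leq_trans (fun n => ltnW (g_incr n)).
elim/ltn_ind => n IH.
have [n1 E1] : exists n1, g n1 = f n by apply/fg; exists n.
have [n2 E2] : exists n2, f n2 = g n by apply/fg; exists n.
have n_n1 : n <= n1.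
  by rewrite leqNgt; apply/negP => lt; have := f_lt _ _ lt; rewrite IH // E1 ltnn.
have n_n2 : n <= n2.
  by rewrite leqNgt; apply/negP => lt; have := g_lt _ _ lt; rewrite -IH // E2 ltnn.
apply/eqP; rewrite eqn_leq -{1}E2 -{2}E1.
by apply/andP; split; [apply: f_le | apply: g_le].
Qed.

Lemma congr_modDl q z x y : x = y %[mod q] -> z + x = z + y %[mod q].
Proof. by move/eqP; rewrite -(eqn_modDl z) => /eqP. Qed.

Lemma congr_modDr q z x y : x = y %[mod q] -> x + z = y + z %[mod q].
Proof. by move/eqP; rewrite -(eqn_modDr z) => /eqP. Qed.

Lemma congr_modM q x1 y1 x2 y2 :
  x1 = y1 %[mod q] -> x2 = y2 %[mod q] -> x1 * x2 = y1 * y2 %[mod q].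
Proof. by move=> e1 e2; rewrite -modnMm e1 e2 modnMm. Qed.

Lemma dvdn_eqmod q x y : x = y %[mod q] -> (q %| x) = (q %| y).
Proof. by move=> e; rewrite /dvdn e. Qed.

Lemma big_nat_shift a n (f : nat -> nat) :
  \sum_(a <= x < a + n) f x = \sum_(0 <= x < n) f (a + x).
Proof. by rewrite -{1}[a]add0n big_addn addKn; apply: eq_bigr => i _; rewrite addnC. Qed.

Lemma big_nat_mul_split A B (f : nat -> nat) :
  \sum_(0 <= x < A * B) f x = \sum_(0 <= a < A) \sum_(0 <= r < B) f (a * B + r).
Proof. by rewrite big_nat_mul; apply: eq_bigr => a _; rewrite mulSnr big_nat_shift. Qed.

Lemma sum_nat_eq_mul n t (g : nat -> nat) :
  \sum_(0 <= d < n) (t == d) * g d = (t < n) * g t.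
Proof.
elim: n => [|n IH]; first by rewrite big_geq.
rewrite big_nat_recr //= IH ltnS.
by case: (ltngtP t n) => [tn|nt|->] /=; rewrite ?mul0n ?mul1n ?addn0 ?add0n.
Qed.

Lemma leq_sum_nat_term n r (f : nat -> nat) : r < n -> f r <= \sum_(0 <= x < n) f x.
Proof.
move=> rn; rewrite (big_cat_nat (n := r)) //= ?(ltnW rn) //.
by rewrite [X in _ <= _ + X]big_ltn // addnCA leq_addr.
Qed.

Lemma sum_bool_le (f : nat -> bool) a n : \sum_(a <= x < n) f x <= n - a.
Proof.
rewrite -[X in _ <= X]muln1 -sum_nat_const_nat.
by apply: leq_sum => r _; apply: leq_b1.
Qed.

Lemma exists_idempotent_power b q :
  0 < q -> exists P, 0 < P /\ b ^ P * b ^ P = b ^ P %[mod q].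
Proof.
move=> q_gt0.
have [i [j [ij Eij]]] : exists i j, i < j /\ b ^ i = b ^ j %[mod q].
  (* pigeonhole on the residues of b ^ 0, ..., b ^ q *)
  case: (boolP [exists x : 'I_q.+1, exists y : 'I_q.+1, (x < y) && (b ^ x == b ^ y %[mod q])]).
    by move/existsP => [x /existsP [y /andP [xy /eqP e]]]; exists x, y.
  move/negP => H; exfalso.
  pose f (x : 'I_q.+1) : 'I_q := Ordinal (ltn_pmod (b ^ x) q_gt0).
  have f_inj : injective f.
    move=> x y /(congr1 val) /= e; apply/val_inj => /=.
    case: (ltngtP x y) => // [xy|yx]; exfalso; apply: H.
      by apply/existsP; exists x; apply/existsP; exists y; rewrite xy e eqxx.
    by apply/existsP; exists y; apply/existsP; exists x; rewrite yx e eqxx.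
  by have := leq_card f f_inj; rewrite !card_ord ltnn.
set p := j - i; have p_gt0 : 0 < p by rewrite subn_gt0.
have periodic x n : i <= x -> b ^ (x + n * p) = b ^ x %[mod q].
  move=> ix; elim: n => [|n IH]; first by rewrite mul0n addn0.
  have ixn : i <= x + n * p by apply: leq_trans ix (leq_addr _ _).
  have -> : x + n.+1 * p = (x + n * p - i) + j by rewrite mulSnr /p; lia.
  by rewrite expnD -modnMmr -Eij modnMmr -expnD subnK.
(* the exponent p (i + 1) is a multiple of the period p that is at least i *)
exists (p * i.+1); split; first by rewrite muln_gt0 p_gt0.
rewrite -expnD {2}(mulnC p) periodic //.
by apply: leq_trans (leqnSn i) _; rewrite leq_pmull.
Qed.

Section Density.
Local Open Scope R_scope.

Lemma INR_addn m n : INR (m + n)%N = INR m + INR n.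
Proof. by rewrite -plusE plus_INR. Qed.

Lemma INR_muln m n : INR (m * n)%N = INR m * INR n.
Proof. by rewrite -multE mult_INR. Qed.

Lemma INR_expn m n : INR (m ^ n)%N = INR m ^ n.
Proof. by elim: n => [|n IH]; rewrite ?expn0 // expnS INR_muln IH. Qed.

Lemma INR_leq m n : (m <= n)%N -> INR m <= INR n.
Proof. by move/leP; apply: le_INR. Qed.

Lemma INR_gt0 n : (0 < n)%N -> 0 < INR n.
Proof. by move/ltP; apply: lt_0_INR. Qed.

Section BlockDensity.
Variables (f : nat -> bool) (c e : R) (B : nat).

Local Notation block_sum a := (\sum_(a * B <= x < a * B + B) f x)%N.

Hypothesis block_close : forall a, Rabs (INR (block_sum a) - c * INR B) <= e * INR B.

Lemma prefix_sum_close a :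
  Rabs (INR (\sum_(0 <= x < a * B) f x)%N - c * INR (a * B)) <= e * INR (a * B).
Proof.
elim: a => [|a IH].
  by rewrite mul0n big_geq //= !Rmult_0_r Rminus_0_r Rabs_R0; lra.
rewrite mulSnr (big_cat_nat (n := (a * B)%N)) ?leq_addr //= !INR_addn.
have := Rabs_triang (INR (\sum_(0 <= x < a * B) f x)%N - c * INR (a * B))
                    (INR (block_sum a) - c * INR B).
have := block_close a; move: IH.
set u := INR _; set v := INR (block_sum a); move=> prefix_a block_a.
have -> : u + v - c * (INR (a * B) + INR B) = u - c * INR (a * B) + (v - c * INR B) by ring.
lra.
Qed.

End BlockDensity.

Lemma density_from_blocks (f : nat -> bool) (c : R) : 0 <= c ->
  (forall eps, 0 < eps -> exists B, (0 < B)%N /\ forall a,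
     Rabs (INR (\sum_(a * B <= x < a * B + B) f x)%N - c * INR B) <= eps * INR B) ->
  Un_cv (fun N => INR (count f (iota 0 N)) / INR N) c.
Proof.
move=> c_ge0 blocks eps eps_gt0.
have [B [B_gt0 HB]] := blocks (eps / 2) ltac:(lra).
have [N0 HN0] := INR_archimed (eps / 2) ((1 + c) * INR B) ltac:(lra).
exists N0.+1 => N /leP N0N; rewrite /R_dist.
have N_gt0 : 0 < INR N by apply: INR_gt0; apply: leq_trans N0N.
have N0_N : INR N0 < INR N by apply: lt_INR; apply/ltP.
have count_sum : count f (iota 0 N) = (\sum_(0 <= x < N) f x)%N.
  rewrite /index_iota subn0.
  by elim: (iota 0 N) => [|x s IH]; rewrite ?big_nil // big_cons /= IH.
set a := (N %/ B)%N; set r := (N %% B)%N.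
have eN : N = (a * B + r)%N by rewrite /a /r -divn_eq.
have rB : (r < B)%N by rewrite /r ltn_mod.
rewrite count_sum {1}eN (big_cat_nat (n := (a * B)%N)) ?leq_addr //= INR_addn.
set u := INR _; set v := INR (\sum_(a * B <= x < a * B + r) f x)%N.
have prefix := prefix_sum_close HB a; rewrite -/u in prefix.
have vr : 0 <= v <= INR r.
  split; first exact: pos_INR.
  by apply: INR_leq; have := sum_bool_le f (a * B) (a * B + r); rewrite addKn.
have rBr : INR r <= INR B by apply: INR_leq; apply: ltnW.
have eNr : INR N = INR (a * B) + INR r by rewrite {1}eN INR_addn.
have aBN : INR (a * B) <= INR N by rewrite eNr; have := pos_INR r; lra.
have key : Rabs (u + v - c * INR N) < eps * INR N.
  have := Rabs_triang (u - c * INR (a * B)) (v - c * INR r).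
  have -> : u - c * INR (a * B) + (v - c * INR r) = u + v - c * INR N by rewrite eNr; ring.
  have hv : Rabs (v - c * INR r) <= (1 + c) * INR B by apply: Rabs_le; split; nra.
  nra.
have -> : (u + v) / INR N - c = (u + v - c * INR N) / INR N by field; lra.
rewrite /Rdiv Rabs_mult Rabs_inv (Rabs_right (INR N)); last by lra.
apply: (Rmult_lt_reg_r (INR N)) => //.
by rewrite Rmult_assoc Rinv_l; lra.
Qed.

End Density.

Section BlockAdditive.
Variables (m b q : nat) (phi : nat -> nat).
Hypotheses (m_gt1 : 1 < m) (q_gt0 : 0 < q) (phi0 : phi 0 = 0).
Hypothesis phi_block :
  forall L a r, r < m ^ L -> phi (a * m ^ L + r) = phi a * b ^ L + phi r.

Section IdempotentPower.
Variable P : nat.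
Hypotheses (P_gt0 : 0 < P) (E_idem : b ^ P * b ^ P = b ^ P %[mod q]).

Local Notation M := (m ^ P).
Local Notation E := (b ^ P).

Lemma M_gt1 : 1 < M.
Proof. by rewrite -[1](expn0 m) ltn_exp2l. Qed.

Lemma M_gt0 : 0 < M.
Proof. exact: ltnW M_gt1. Qed.

Lemma E_mulX t : E * b ^ (P * t) = E %[mod q].
Proof.
elim: t => [|t IH]; first by rewrite muln0 expn0 muln1.
by rewrite mulnS expnD mulnA -modnMml E_idem modnMml.
Qed.

Lemma E_block t a r :
  r < M ^ t -> E * phi (a * M ^ t + r) = E * phi a + E * phi r %[mod q].
Proof.
rewrite -expnM => rlt; rewrite phi_block // mulnDr mulnCA.
by rewrite -modnDml -modnMmr E_mulX modnMmr modnDml mulnC.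
Qed.

(* The attained residues are closed under addition, so they form a subgroup H
   of Z/q; [c] is cancellable iff [-c], equivalently [c], lies in H. *)
Definition attained g := exists r, E * phi r = g %[mod q].
Definition cancellable c := exists r, q %| c + E * phi r.

Lemma attained_phi r : attained (E * phi r).
Proof. by exists r. Qed.

Lemma attained0 : attained 0.
Proof. by exists 0; rewrite phi0 muln0. Qed.

Lemma attainedD x y : attained x -> attained y -> attained (x + y).
Proof.
move=> [r1 e1] [r2 e2]; exists (r2 * M ^ r1 + r1).
rewrite E_block; last by apply: ltn_expl; apply: M_gt1.
by rewrite -modnDm e1 e2 modnDm addnC.
Qed.

Lemma attainedMn t x : attained x -> attained (t * x).
Proof.
move=> Ax; elim: t => [|t IH]; first by rewrite mul0n; apply: attained0.
by rewrite mulSn; apply: attainedD.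
Qed.

Lemma attained_eqmod x y : x = y %[mod q] -> attained x -> attained y.
Proof. by move=> exy [r e]; exists r; rewrite e. Qed.

(* [(q - 1) * x] represents [-x] modulo [q]. *)
Lemma attained_opp_phi r0 r : attained (E * phi r0 + (q - 1) * (E * phi r)).
Proof. by apply: attainedD; [apply: attained_phi | apply: attainedMn; apply: attained_phi]. Qed.

Lemma mul_subn1_addn x : (q - 1) * x + x = q * x.
Proof. by rewrite mulnBl mul1n subnK // leq_pmull. Qed.

Lemma cancellableD c r : cancellable c -> cancellable (c + E * phi r).
Proof.
move=> [r0 h0]; have [r1 e1] := attained_opp_phi r0 r; exists r1.
rewrite -addnA (dvdn_eqmod (congr_modDl c (congr_modDl (E * phi r) e1))).
by rewrite addnCA addnC -!addnA mul_subn1_addn addnA dvdn_add // dvdn_mulr.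
Qed.

Lemma cancellable_eqmod c d : c = d %[mod q] -> cancellable c -> cancellable d.
Proof.
move=> e [r h]; exists r; rewrite -(dvdn_eqmod (x := c + E * phi r)) //.
by rewrite -modnDml e modnDml.
Qed.

Lemma cancellableDE x a : cancellable (x + E * phi a) <-> cancellable x.
Proof.
split; last exact: cancellableD.
move=> [r h]; have [r1 e1] := attainedD (attained_phi a) (attained_phi r).
exists r1; rewrite (dvdn_eqmod (y := x + E * phi a + E * phi r)) //.
by rewrite -addnA -modnDmr e1 modnDmr.
Qed.

Lemma cancellable_connect c d :
  cancellable c -> cancellable d -> exists2 g, attained g & c + g = d %[mod q].
Proof.
move=> [rc hc] [rd hd]; exists (E * phi rc + (q - 1) * (E * phi rd)).
  exact: attained_opp_phi.
apply/eqP; rewrite -(eqn_modDr (E * phi rd)) -addnA -addnA mul_subn1_addn addnA.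
move: hc hd; rewrite /dvdn => /eqP hc /eqP hd.
by rewrite hd -modnDml hc add0n modnMr.
Qed.

Lemma attained_below :
  exists K, forall g, attained g -> exists2 r, r < M ^ K & E * phi r = g %[mod q].
Proof.
suff /(_ q) [K HK] : forall n, exists K, forall g, g < n -> attained g ->
    exists2 r, r < M ^ K & E * phi r = g %[mod q].
  exists K => g Ag; have [r rl e] := HK (g %% q) (ltn_pmod g q_gt0)
    (attained_eqmod (esym (modn_mod g q)) Ag).
  by exists r => //; rewrite e modn_mod.
elim=> [|n [K HK]]; first by exists 0.
have M_le i j : i <= j -> M ^ i <= M ^ j by rewrite leq_exp2l ?M_gt1.
case: (classic (attained n)) => [[r0 e0]|nA]; last first.
  by exists K => g; rewrite ltnS leq_eqVlt => /orP [/eqP ->|gn] Ag //; apply: HK.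
exists (maxn K r0) => g; rewrite ltnS leq_eqVlt => /orP [/eqP ->|gn] Ag.
  by exists r0 => //; apply: leq_trans (ltn_expl _ M_gt1) (M_le _ _ (leq_maxr K r0)).
have [r rl e] := HK g gn Ag; exists r => //.
exact: leq_trans rl (M_le _ _ (leq_maxl K r0)).
Qed.

Definition nhits j c := \sum_(0 <= r < M ^ j) (q %| c + E * phi r).

Lemma nhits_eqmod j c d : c = d %[mod q] -> nhits j c = nhits j d.
Proof.
by move=> e; apply: eq_bigr => r _; rewrite (dvdn_eqmod (congr_modDr _ e)).
Qed.

Lemma nhits_eq0 j c : ~ cancellable c -> nhits j c = 0.
Proof.
move=> nc; apply: big1 => r _.
by case: (boolP (q %| _)) => // h; exfalso; apply: nc; exists r.
Qed.

Lemma nhits_le j c : nhits j c <= M ^ j.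
Proof. by rewrite -[X in _ <= X]subn0; apply: sum_bool_le. Qed.

Lemma nhitsD j i c : nhits (j + i) c = \sum_(0 <= r < M ^ i) nhits j (c + E * phi r).
Proof.
rewrite /nhits expnD big_nat_mul_split exchange_big_nat.
apply: eq_big_nat => r /andP [_ ri]; apply: eq_bigr => a _.
rewrite (dvdn_eqmod (congr_modDl c (E_block a ri))).
by rewrite (addnC (E * phi a)) addnA.
Qed.

Lemma sum_dvdn_addr x : \sum_(0 <= d < q) (q %| d + x) = 1.
Proof.
set t := (q - x %% q) %% q.
have t_lt : t < q by rewrite ltn_pmod.
rewrite (eq_big_nat _ _ (F2 := fun d => (t == d) * 1)).
  by rewrite sum_nat_eq_mul t_lt.
move=> d /andP [_ dq]; rewrite muln1.
rewrite (dvdn_eqmod (congr_modDl d (esym (modn_mod x q)))) /dvdn.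
have tx : (t + x %% q) %% q = 0.
  rewrite /t modnDml subnK ?modnn //.
  exact: ltnW (ltn_pmod _ q_gt0).
by rewrite -tx eqn_modDr !modn_small // eq_sym.
Qed.

Lemma sum_nhits j : \sum_(0 <= d < q) nhits j d = M ^ j.
Proof.
rewrite /nhits exchange_big_nat /= (eq_bigr (fun _ => 1)).
  by rewrite sum_nat_const_nat subn0 muln1.
by move=> r _; apply: sum_dvdn_addr.
Qed.

Section Doeblin.
Variable K : nat.
Hypothesis K_below :
  forall g, attained g -> exists2 r, r < M ^ K & E * phi r = g %[mod q].

Definition cancellableb c := has (fun r => q %| c + E * phi r) (iota 0 (M ^ K)).

Lemma cancellableP c : reflect (cancellable c) (cancellableb c).
Proof.
apply: (iffP hasP) => [[r _ h]|[r0 h0]]; first by exists r.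
have [r rl e] := K_below (attained_phi r0).
exists r; first by rewrite mem_iota add0n rl.
by rewrite (dvdn_eqmod (congr_modDl c e)).
Qed.

Lemma cancellable0 : cancellable 0.
Proof. by exists 0; rewrite phi0 muln0 dvdn0. Qed.

(* [nres] is the order of H, and [slack = M ^ K - nres] governs the rate of
   equidistribution over H. *)
Definition nres := \sum_(0 <= d < q) cancellableb d.
Definition slack := M ^ K - nres.
Definition ntrans c d := \sum_(0 <= r < M ^ K) ((c + E * phi r) %% q == d).

Lemma nres_gt0 : 0 < nres.
Proof.
apply: leq_trans (leq_sum_nat_term (fun d => nat_of_bool (cancellableb d)) q_gt0).
by case: cancellableP => // /(_ cancellable0).
Qed.

Lemma nhits_cancellableb j d : cancellableb d * nhits j d = nhits j d.
Proof. by case: cancellableP => [_|nc]; rewrite ?mul1n // nhits_eq0. Qed.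

Lemma sum_cancellable_nhits j : \sum_(0 <= d < q) cancellableb d * nhits j d = M ^ j.
Proof. by rewrite -(sum_nhits j); apply: eq_bigr => d _; rewrite nhits_cancellableb. Qed.

Lemma leq_sum_cancellable (f g : nat -> nat) :
  (forall d, cancellable d -> f d <= g d) ->
  \sum_(0 <= d < q) cancellableb d * f d <= \sum_(0 <= d < q) cancellableb d * g d.
Proof.
move=> fg; apply: leq_sum => d _.
by case: cancellableP => [Cd|_] /=; rewrite ?mul0n // !mul1n fg.
Qed.

Lemma nhits_ntrans j c : nhits (j + K) c = \sum_(0 <= d < q) ntrans c d * nhits j d.
Proof.
rewrite nhitsD (eq_bigr (fun r => \sum_(0 <= d < q) ((c + E * phi r) %% q == d) * nhits j d)).
  by rewrite exchange_big_nat; apply: eq_bigr => d _; rewrite /ntrans big_distrl.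
move=> r _; rewrite sum_nat_eq_mul ltn_pmod // mul1n.
by apply: nhits_eqmod; rewrite modn_mod.
Qed.

Lemma sum_ntrans c : \sum_(0 <= d < q) ntrans c d = M ^ K.
Proof.
rewrite /ntrans exchange_big_nat /= (eq_bigr (fun _ => 1)).
  by rewrite sum_nat_const_nat subn0 muln1.
move=> r _; rewrite (eq_bigr (fun d => ((c + E * phi r) %% q == d) * 1)).
  by rewrite sum_nat_eq_mul ltn_pmod.
by move=> d _; rewrite muln1.
Qed.

Lemma ntrans_gt0 c d : cancellable c -> cancellable d -> d < q -> 0 < ntrans c d.
Proof.
move=> Cc Cd dq; have [g Ag e] := cancellable_connect Cc Cd.
have [r rl er] := K_below Ag.
apply: leq_trans (leq_sum_nat_term (fun r => nat_of_bool ((c + E * phi r) %% q == d)) rl).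
by rewrite -(modn_small dq) -e (congr_modDl c er) eqxx.
Qed.

Lemma ntrans_eq0 c d : cancellable c -> ~ cancellable d -> ntrans c d = 0.
Proof.
move=> Cc nCd; apply: big1 => r _; case: eqP => // e; exfalso; apply: nCd.
apply: (cancellable_eqmod (c := c + E * phi r)); last exact: cancellableD.
by rewrite -e modn_mod.
Qed.

Lemma sum_cancellable_ntrans c :
  cancellable c -> \sum_(0 <= d < q) cancellableb d * (ntrans c d - 1) = slack.
Proof.
move=> Cc; rewrite /slack -(sum_ntrans c) /nres.
have -> : \sum_(0 <= d < q) ntrans c d =
    \sum_(0 <= d < q) cancellableb d * (ntrans c d - 1) + \sum_(0 <= d < q) cancellableb d.
  rewrite -big_split; apply: eq_big_nat => d /andP [_ dq] /=.
  case: cancellableP => [Cd|nCd] /=; last by rewrite ntrans_eq0.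
  by rewrite mul1n subnK // ntrans_gt0.
by rewrite addnK.
Qed.

(* One Doeblin step: from every cancellable [c], each cancellable residue is
   reached by at least one of the [M ^ K] transitions, so after [K] more digits
   the spread [Hi - Lo] of the counts shrinks by the factor [slack]. *)
Lemma nhits_contract j Lo Hi :
  (forall d, cancellable d -> Lo <= nhits j d <= Hi) ->
  forall c, cancellable c -> M ^ j + slack * Lo <= nhits (j + K) c <= M ^ j + slack * Hi.
Proof.
move=> bounds c Cc.
have -> : nhits (j + K) c = M ^ j +
    \sum_(0 <= d < q) cancellableb d * ((ntrans c d - 1) * nhits j d).
  rewrite nhits_ntrans -(sum_cancellable_nhits j) -big_split.
  apply: eq_big_nat => d /andP [_ dq] /=.
  case: cancellableP => [Cd|nCd] /=; last by rewrite nhits_eq0 // !muln0.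
  by rewrite !mul1n -mulSn subn1 prednK // ntrans_gt0.
rewrite !leq_add2l -(sum_cancellable_ntrans Cc) !big_distrl /=.
under eq_bigr do rewrite -mulnA; under [X in _ <= _ <= X]eq_bigr do rewrite -mulnA.
apply/andP; split; apply: leq_sum_cancellable => d Cd; rewrite leq_mul2l.
  by case/andP: (bounds d Cd) => -> _; rewrite orbT.
by case/andP: (bounds d Cd) => _ ->; rewrite orbT.
Qed.

Lemma nhits_band n :
  exists Lo, forall c, cancellable c -> Lo <= nhits (n * K) c <= Lo + slack ^ n.
Proof.
elim: n => [|n [Lo HL]].
  exists 0 => c _; rewrite mul0n expn0 add0n leq0n /=.
  by have := nhits_le 0 c; rewrite expn0.
exists (M ^ (n * K) + slack * Lo) => c Cc; rewrite mulSnr.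
by have := nhits_contract HL Cc; rewrite mulnDr -addnA -expnS.
Qed.

Lemma nhits_equidistributed n c : cancellable c ->
  nres * nhits (n * K) c <= M ^ (n * K) + nres * slack ^ n /\
  M ^ (n * K) <= nres * nhits (n * K) c + nres * slack ^ n.
Proof.
move=> Cc; have [Lo HL] := nhits_band n.
have lo : nres * Lo <= M ^ (n * K).
  rewrite -(sum_cancellable_nhits (n * K)) /nres big_distrl /=.
  by apply: leq_sum_cancellable => d Cd; case/andP: (HL d Cd).
have hi : M ^ (n * K) <= nres * Lo + nres * slack ^ n.
  rewrite -mulnDr -(sum_cancellable_nhits (n * K)) /nres big_distrl /=.
  by apply: leq_sum_cancellable => d Cd; case/andP: (HL d Cd).
case/andP: (HL c Cc) => h1 h2.
have : nres * Lo <= nres * nhits (n * K) c by rewrite leq_mul2l h1 orbT.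
have : nres * nhits (n * K) c <= nres * Lo + nres * slack ^ n.
  by rewrite -mulnDr leq_mul2l h2 orbT.
split; lia.
Qed.

Definition nstart := \sum_(0 <= s < M) cancellableb (phi s).

Lemma nstart_gt0 : 0 < nstart.
Proof.
apply: leq_trans (leq_sum_nat_term (fun s => nat_of_bool (cancellableb (phi s))) M_gt0).
by rewrite phi0; case: cancellableP => // /(_ cancellable0).
Qed.

Definition blen n := M ^ (n * K) * M.

Definition block_count n a := \sum_(a * blen n <= x < a * blen n + blen n) (q %| phi x).

(* Write [x] in the [a]-th block as [(a * M ^ (n * K) + y) * M + s]. *)
Lemma block_countE n a :
  block_count n a = \sum_(0 <= s < M) nhits (n * K) (phi s + E * phi a).
Proof.
rewrite /block_count /blen big_nat_shift big_nat_mul_split exchange_big_nat.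
apply: eq_big_nat => s /andP [_ sM]; apply: eq_big_nat => y /andP [_ yl].
congr nat_of_bool.
have -> : a * (M ^ (n * K) * M) + (y * M + s) = (a * m ^ (P * (n * K)) + y) * m ^ P + s.
  by rewrite -expnM; nia.
rewrite phi_block // phi_block; last by rewrite expnM.
apply: dvdn_eqmod.
have -> : (phi a * b ^ (P * (n * K)) + phi y) * E + phi s =
    phi s + phi a * (E * b ^ (P * (n * K))) + E * phi y by nia.
apply: congr_modDr; apply: congr_modDl.
by rewrite mulnC; apply: congr_modM => //; apply: E_mulX.
Qed.

Lemma block_count_equidistributed n a :
  nres * block_count n a <= nstart * M ^ (n * K) + M * (nres * slack ^ n) /\
  nstart * M ^ (n * K) <= nres * block_count n a + M * (nres * slack ^ n).
Proof.
have pt s : nres * nhits (n * K) (phi s + E * phi a)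
                <= cancellableb (phi s) * M ^ (n * K) + nres * slack ^ n /\
            cancellableb (phi s) * M ^ (n * K)
                <= nres * nhits (n * K) (phi s + E * phi a) + nres * slack ^ n.
  case: cancellableP => [Cs|nCs] /=.
    by rewrite mul1n; apply: nhits_equidistributed; apply/cancellableDE.
  by rewrite nhits_eq0 ?muln0 ?mul0n // => /cancellableDE.
have eM : M * (nres * slack ^ n) = \sum_(0 <= s < M) nres * slack ^ n.
  by rewrite sum_nat_const_nat subn0.
rewrite block_countE eM /nstart big_distrr big_distrl /= -!big_split /=.
by split; apply: leq_sum => s _; case: (pt s).
Qed.

Lemma slack_pow_small (eps : R) : (0 < eps)%R ->
  exists n, (INR slack ^ n <= eps * INR (M ^ (n * K))%N)%R.
Proof.
move=> eps_gt0; set Y := INR (M ^ K).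
have Y_gt0 : (0 < Y)%R by apply: INR_gt0; rewrite expn_gt0 M_gt0.
have slack_lt : slack < M ^ K by rewrite /slack ltn_subrL nres_gt0 expn_gt0 M_gt0.
set th := (INR slack / Y)%R.
have th_ge0 : (0 <= th)%R by apply: Rle_mult_inv_pos => //; apply: pos_INR.
have th_lt1 : (th < 1)%R.
  rewrite /th; apply: (Rmult_lt_reg_r Y) => //.
  rewrite /Rdiv Rmult_assoc Rinv_l ?Rmult_1_l ?Rmult_1_r; last by lra.
  by apply: lt_INR; apply/ltP.
have [n Hn] := pow_lt_1_zero th ltac:(rewrite Rabs_right; lra) eps eps_gt0.
exists n; have := Hn n (le_n n); rewrite Rabs_right; last by apply: Rle_ge; apply: pow_le.
have -> : INR (M ^ (n * K)) = (Y ^ n)%R by rewrite /Y -INR_expn (mulnC n K) expnM.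
have -> : (INR slack ^ n = th ^ n * Y ^ n)%R.
  by rewrite -Rpow_mult_distr /th /Rdiv Rmult_assoc Rinv_l ?Rmult_1_r //; lra.
by move=> th_n; apply: Rmult_le_compat_r; [apply: pow_le; lra | lra].
Qed.

Lemma block_count_close (eps : R) : (0 < eps)%R -> exists n, forall a,
  (Rabs (INR (block_count n a) - INR nstart / (INR nres * INR M) * INR (blen n))
     <= eps * INR (blen n))%R.
Proof.
move=> eps_gt0; have [n Hn] := slack_pow_small eps_gt0.
exists n => a; have [b1 b2] := block_count_equidistributed n a.
move: b1 b2 => /INR_leq b1 /INR_leq b2; rewrite /blen.
rewrite !INR_addn !INR_muln (INR_expn slack) in b1 b2 *.
set X := INR (M ^ (n * K)) in Hn b1 b2 *.
set C := INR (block_count n a) in b1 b2 *.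
set Z := INR nres in b1 b2 *; set W := (INR slack ^ n)%R in Hn b1 b2 *.
have Z_gt0 : (0 < Z)%R by apply: INR_gt0; apply: nres_gt0.
have M_gt0R : (0 < INR M)%R by apply: INR_gt0; apply: M_gt0.
have W_ge0 : (0 <= W)%R by apply: pow_le; apply: pos_INR.
have -> : (C - INR nstart / (Z * INR M) * (X * INR M) = (Z * C - INR nstart * X) / Z)%R.
  by field; lra.
have hMZ : (INR M * Z * W <= INR M * Z * (eps * X))%R.
  by apply: Rmult_le_compat_l => //; nra.
have eD : ((Z * C - INR nstart * X) / Z * Z = Z * C - INR nstart * X)%R by field; lra.
by apply: Rabs_le; split; apply: (Rmult_le_reg_r Z) => //; rewrite eD; nra.
Qed.

End Doeblin.

End IdempotentPower.

Lemma density_dvd_block_additive : exists L, (0 < L)%R /\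
  Un_cv (fun N => INR (count (fun n => q %| phi n) (iota 0 N)) / INR N)%R L.
Proof.
have [P [P_gt0 E_idem]] := exists_idempotent_power b q_gt0.
have [K K_below] := attained_below P_gt0.
set L := (INR (nstart P K) / (INR (nres P K) * INR (m ^ P)))%R.
have L_gt0 : (0 < L)%R.
  apply: Rdiv_lt_0_compat; first by apply: INR_gt0; apply: nstart_gt0.
  by apply: Rmult_lt_0_compat; apply: INR_gt0; [apply: nres_gt0 | apply: M_gt0].
exists L; split => //; apply: density_from_blocks; first exact: Rlt_le.
move=> eps /(block_count_close P_gt0 E_idem K_below) [n Hn].
by exists (blen P K n); split => //; rewrite /blen muln_gt0 !expn_gt0 ltnW.
Qed.

End BlockAdditive.

Theorem mainTheorem10 (b : nat) (D : {set 'I_b}) (k : nat -> nat) :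
  3 <= b ->
  (exists2 d : 'I_b, d \in D & nat_of_ord d = 0) ->
  2 <= #|D| ->
  #|D| < b ->
  (forall n, k n < k n.+1) ->
  (forall x, inC D x <-> exists n, k n = x) ->
  forall q : nat, 0 < q ->
    exists L : R, (0 < L)%R /\ Un_cv (density_seq k q) L.
Proof.
move=> _ D0 D_gt1 _ k_incr k_onto q q_gt0.
have k_enumC : k =1 enumC D.
  apply: increasing_enum_unique => // [n|x]; first exact: enumC_ltS.
  rewrite -k_onto; split; first exact: enumC_onto.
  by move=> [n <-]; apply: inC_enumC.
have [L [L_gt0 HL]] :=
  density_dvd_block_additive D_gt1 q_gt0 (erefl 0) (enumC_block D0 D_gt1).
exists L; split => //; apply: Un_cv_ext HL => N.
rewrite /density_seq /count_div (eq_count (a2 := fun n => q %| enumC D n)) //.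
by move=> n /=; rewrite k_enumC.
Qed.
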